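(* Let $G$ be a finite group with $|G|>1$, let $p$ be the largest prime divisor of $|G|$, and suppose there exists $x\in G$ with $[G:\langle x\rangle]<2p$. Then one of the following holds: (i) $G$ has a normal cyclic Sylow $p$-subgroup; (ii) $G$ is solvable and $\langle x\rangle$ is a maximal subgroup of $G$ of index either $p$ or $p+1$. *)

From HB Require Import structures.
From mathcomp Require Import all_boot all_order all_fingroup all_solvable.
Set Implicit Arguments. Unset Strict Implicit. Unset Printing Implicit Defensive.

From HB Require Import structures.
From mathcomp Require Import all_boot all_order all_fingroup all_solvable.
From mathcomp Require vcharacter.
From mathcomp Require Import zify.
Set Implicit Arguments. Unset Strict Implicit. Unset Printing Implicit Defensive.

(* Let H = <[x]>, n = #|G : H| < 2p. If p divides n then n = p, so H is maximal
   of prime index. Otherwise the Sylow p-subgroup P = O_p(H) of G is cyclic and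
   n_p(G) = #|G : N_G(P)| is a divisor of n that is 1 modulo p, hence 1 (case
   (i)) or p + 1, in which case H = N_G(P) and Sylow counting inside
   intermediate subgroups shows that H is maximal. In both cases H is abelian
   and maximal, so either H is normal, or H is self-normalizing and then
   G / core_G(H) is a Frobenius group with complement H / core_G(H) whose
   kernel has order p or p + 1. Such a kernel is cyclic, resp. a p-group
   (the complement then acts regularly on its nontrivial elements), hence G
   is solvable. *)

Lemma modn1_mul_ltn_double (p s m : nat) :
  1 < p -> s %% p = 1 -> s != 1 -> 0 < m -> s * m < 2 * p ->
  s = p.+1 /\ m = 1.
Proof.
move=> p_gt1 s_mod s_neq1 m_gt0 lt_sm_2p.
have {s_mod} : s = s %/ p * p + 1 by rewrite {1}(divn_eq s p) s_mod.
move: (s %/ p) => q s_def; subst s.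
have : q * p < 2 * p by have := leq_pmulr (q * p + 1) m_gt0; lia.
rewrite ltn_pmul2r ?(ltnW p_gt1) //.
case: q s_neq1 lt_sm_2p => [|[|//]]; first by rewrite mul0n.
rewrite mul1n addn1 => _ lt_pm_2p _; split=> //.
have : m < 2 by rewrite -(ltn_pmul2l (ltn0Sn p)); lia.
lia.
Qed.

Lemma modn1_dvd_succ (p t : nat) :
  1 < p -> t %% p = 1 -> t %| p.+1 -> (t == 1) || (t == p.+1).
Proof.
move=> p_gt1 t_mod t_dvd; have := dvdn_leq (ltn0Sn p) t_dvd.
have {t_mod} : t = t %/ p * p + 1 by rewrite {1}(divn_eq t p) t_mod.
move: (t %/ p) => q ->; have [->|q_gt0] := posnP q; first by [].
by move=> le_t; apply/orP; right; apply/eqP; nia.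
Qed.

Lemma dvdn_ltn_double (p n : nat) : 0 < n -> p %| n -> n < 2 * p -> n = p.
Proof.
move=> + /dvdnP[k n_def]; rewrite n_def muln_gt0 => /andP[k_gt0 p_gt0].
by rewrite ltn_pmul2r //; case: k {n_def} k_gt0 => [|[|]] // _; rewrite mul1n.
Qed.

Import GroupScope.

Section FiniteGroups.

Variable gT : finGroupType.
Implicit Types G H K X Y P M : {group gT}.

Lemma maximal_sub_cases G H M :
  maximal H G -> H \subset M -> M \subset G -> M :=: H \/ M :=: G.
Proof.
by move=> maxH; have [_] := maximal_eqP _ _ (introT orP (or_intror maxH)); apply.
Qed.

Lemma maximal_selfnormalizing_or_normal G H :
  maximal H G -> 'N_G(H) \subset H \/ H <| G.
Proof.
move=> maxH; have sHG := proper_sub (maxgroupp maxH).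
have sHN : H \subset 'N_G(H) by rewrite subsetI sHG normG.
case: (maximal_sub_cases maxH sHN (subsetIl G _)) => [-> | eqN]; first by left.
by right; rewrite /normal sHG -eqN subsetIr.
Qed.

Lemma nilpotent_pcore_Sylow p G H :
  prime p -> H \subset G -> nilpotent H -> ~~ (p %| #|G : H|) ->
  p.-Sylow(G) 'O_p(H).
Proof.
move=> pr_p sHG nilH p'iH; have /and3P[sPH _ p'iP] := nilpotent_pcore_Hall p nilH.
rewrite /pHall (subset_trans sPH sHG) pcore_pgroup -(Lagrange_index sHG sPH).
by rewrite pnatM (p'natE _ pr_p) p'iH.
Qed.

(* Sylow counting inside an intermediate subgroup M: n_p(M) = #|M : H| is 1
   modulo p and divides #|G : H| = p + 1. *)
Lemma Sylow_normalizer_maximal p G H P :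
  prime p -> p.-Sylow(G) P -> P \subset H -> 'N_G(P) = H -> #|G : H| = p.+1 ->
  maximal H G.
Proof.
move=> pr_p sylP sPH nPE iH.
have sHG : H \subset G by rewrite -nPE subsetIl.
apply/maxgroupP; split=> [|M prMG sHM].
  by rewrite properE sHG -indexg_gt1 iH ltnS prime_gt0.
have sMG := proper_sub prMG.
have sylPM : p.-Sylow(M) P := pHall_subl (subset_trans sPH sHM) sMG sylP.
have nPM : 'N_M(P) = H.
  apply/eqP; rewrite eqEsubset -{1}nPE setSI //= subsetI sHM.
  by rewrite -nPE subsetIr.
have iMH_mod := card_Syl_mod M pr_p; rewrite (card_Syl sylPM) nPM in iMH_mod.
have iMH_dvd : #|M : H| %| p.+1 by rewrite -iH -(Lagrange_index sMG sHM) dvdn_mull.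
case/orP: (modn1_dvd_succ (prime_gt1 pr_p) iMH_mod iMH_dvd) => /eqP iMH.
  by apply/eqP; rewrite eq_sym eqEcard sHM -(Lagrange sHM) iMH muln1 /=.
have := Lagrange_index sMG sHM; rewrite iMH iH -{2}(mul1n p.+1) => /eqP.
by rewrite eqn_mul2r /= => /eqP/(index1g sMG) eqMG; rewrite eqMG properE subxx in prMG.
Qed.

(* H and H^g generate G by maximality, and both centralize H :&: H^g. *)
Lemma abelian_maximal_capJ_sub_gcore G H g :
  abelian H -> maximal H G -> g \in G -> H :^ g != H ->
  H :&: H :^ g \subset gcore H G.
Proof.
move=> abH maxH Gg neqHg; apply/subsetP => y /setIP[Hy Hgy].
have sHG := proper_sub (maxgroupp maxH).
have sHgG : H :^ g \subset G by rewrite sub_conjg conjGid ?groupV.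
have joinHHg : H <*> H :^ g = G.
  have sJG : H <*> H :^ g \subset G by rewrite join_subG sHG.
  case: (maximal_sub_cases maxH (joing_subl H (H :^ g)) sJG) => // eqJ.
  have sHgH : H :^ g \subset H by rewrite -{2}eqJ joing_subr.
  by case/negP: neqHg; rewrite eqEcard sHgH cardJg leqnn.
have cGy : G \subset 'C[y].
  rewrite -joinHHg join_subG !sub_cent1 (subsetP abH) //.
  by have /subsetP-> : abelian (H :^ g) by rewrite abelianJ.
apply/bigcapP => z Gz; rewrite mem_conjg.
by have /cent1P cyz := subsetP cGy _ (groupVr Gz); rewrite /conjg -cyz mulKg.
Qed.

Lemma Frobenius_quotient_gcore G H :
  abelian H -> maximal H G -> 'N_G(H) \subset H ->
  [Frobenius G / gcore H G with complement H / gcore H G].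
Proof.
move=> abH maxH snH; set N := gcore H G.
have prHG := maxgroupp maxH; have sHG := proper_sub prHG.
have nsNG : N <| G := gcore_normal sHG; have sNH : N \subset H := gcore_sub H G.
have nNG := normal_norm nsNG; have nNH := subset_trans sHG nNG.
have ltHG : 1 < #|G : H| by rewrite indexg_gt1; case/andP: prHG.
have iHG : #|G / N : H / N| = #|G : H|.
  by rewrite index_quotient_eq // subIset // sNH orbT.
apply/andP; split.
  by apply: contraTneq ltHG => eqHG; rewrite -iHG eqHG indexgg.
apply/normedTI_memJ_P; split.
- rewrite setD_eq0 quotient_sub1 //; apply: contraTN ltHG => sHN.
  have eqHN : H :=: N by apply/eqP; rewrite eqEsubset sHN.
  have nHG : G \subset 'N(H) by rewrite eqHN.
  have sGH : G \subset H by apply: subset_trans snH; rewrite subsetI subxx.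
  by rewrite indexg_gt1 negbK.
- exact: quotientS.
move=> a _ /setD1P[nta Ha] /morphimP[g Ng Gg ->]; apply/idP/idP; last first.
  by move=> Hg; rewrite !inE conjg_eq1 nta groupJ.
case/setD1P=> _ Hag; have [Hg | H'g] := boolP (g \in H); first exact: mem_quotient.
have Gg' : g^-1 \in G by rewrite groupV.
have neqHg : H :^ g^-1 != H.
  apply: contra H'g => /eqP eqHg.
  have : g^-1 \in 'N_G(H) by rewrite inE Gg'; apply/normP.
  by move/(subsetP snH); rewrite groupV.
have : a \in (H :&: H :^ g^-1) / N.
  rewrite quotientGI // quotientJ ?(subsetP nNG) // inE Ha /=.
  by rewrite mem_conjg (morphV _ Ng) invgK.
move/(subsetP (quotientS N (abelian_maximal_capJ_sub_gcore abH maxH Gg' neqHg))).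
by rewrite trivg_quotient inE (negPf nta).
Qed.

(* Y acts regularly on K^#, so all nontrivial elements of K are conjugate and
   thus have the same prime order. *)
Lemma sharp_Frobenius_ker_pgroup X K Y :
  [Frobenius X = K ><| Y] -> #|Y| = #|K|.-1 -> (pdiv #|K|).-group K.
Proof.
move=> frobX oY; have [defX ntK _ _ _] := Frobenius_context frobX.
have [nsKX _ _ nKY _] := sdprod_context defX.
have oK1 : #|K^#| = #|Y| by rewrite oY (cardsD1 1 K) group1.
have orbitK1 k : k \in K^# -> orbit 'J Y k = K^#.
  move=> K1k; apply/eqP; rewrite eqEcard; apply/andP; split.
    apply/subsetP => _ /orbitP[y Yy <-]; case/setD1P: K1k => ntk Kk.
    by rewrite !inE conjg_eq1 ntk memJ_norm // (subsetP nKY).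
  by rewrite card_orbit astab1J (Frobenius_reg_compl frobX) // indexg1 oK1.
have orderK1 k1 k2 : k1 \in K^# -> k2 \in K^# -> #[k2] = #[k1].
  by move=> K1k1; rewrite -(orbitK1 _ K1k1) => /orbitP[y _ <-]; rewrite orderJ.
have nontriv q k : prime q -> #[k] = q -> k \in K -> k \in K^#.
  move=> pr_q ok Kk; rewrite !inE Kk andbT.
  by apply: contraTneq pr_q => k1; rewrite -ok k1 order1.
have gt1K : 1 < #|K| by rewrite cardG_gt1.
have [k Kk ok] := Cauchy (pdiv_prime gt1K) (pdiv_dvd _).
apply/pgroupP => q pr_q qK; have [k' Kk' ok'] := Cauchy pr_q qK.
rewrite inE -ok' (orderK1 k) ?ok //.
  exact: nontriv (pdiv_prime gt1K) ok Kk.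
exact: nontriv pr_q ok' Kk'.
Qed.

Lemma Frobenius_sol X Y :
  [Frobenius X with complement Y] -> solvable Y ->
  prime #|X : Y| \/ prime #|X : Y|.-1 -> solvable X.
Proof.
move=> frobXY solY index_pr.
have [K frobX] := vcharacter.Frobenius_kernel_exists frobXY.
have [defX ntK ntY _ _] := Frobenius_context frobX.
have [nsKX sYX _ _ _] := sdprod_context defX.
have oK : #|K| = #|X : Y| by rewrite -divgS // -(sdprod_card defX) mulnK.
rewrite (series_sol nsKX); apply/andP; split; last first.
  by have [_ <- _ _] := sdprodP defX; rewrite quotientMidl quotient_sol.
rewrite -oK in index_pr; case: index_pr => [pr_K | pr_K1].
  exact/abelian_sol/cyclic_abelian/prime_cyclic.
apply/(pgroup_sol (p := pdiv #|K|))/(sharp_Frobenius_ker_pgroup frobX).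
have [_ /(_ _ (Frobenius_dvd_ker1 frobX))] := primeP pr_K1.
by case/orP=> /eqP // oY; move: ntY; rewrite trivg_card1 oY.
Qed.

End FiniteGroups.

Lemma abelian_maximal_selfnormalizing_sol (gT : finGroupType) (G H : {group gT}) :
  abelian H -> maximal H G -> 'N_G(H) \subset H ->
  prime #|G : H| \/ prime #|G : H|.-1 -> solvable G.
Proof.
move=> abH maxH snH index_pr; set N := gcore H G.
have sHG := proper_sub (maxgroupp maxH).
have sNH : N \subset H := gcore_sub H G; have nsNG : N <| G := gcore_normal sHG.
rewrite (series_sol nsNG) (abelian_sol (abelianS sNH abH)) /=.
apply: (Frobenius_sol (Frobenius_quotient_gcore abH maxH snH)).
  exact/abelian_sol/quotient_abelian.
by rewrite index_quotient_eq ?(subset_trans (subsetIr _ _) sNH) ?normal_norm.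
Qed.

Lemma abelian_prime_index_sol (gT : finGroupType) (G H : {group gT}) :
  H \subset G -> abelian H -> prime #|G : H| -> solvable G.
Proof.
move=> sHG abH pr_iH; have maxH := p_index_maximal sHG pr_iH.
have [snH | nsHG] := maximal_selfnormalizing_or_normal maxH.
  exact: abelian_maximal_selfnormalizing_sol snH (or_introl pr_iH).
rewrite (series_sol nsHG) (abelian_sol abH).
by apply/abelian_sol/cyclic_abelian/prime_cyclic; rewrite card_quotient ?normal_norm.
Qed.

Lemma abelian_pcore_normal_or_maximal (gT : finGroupType) p (G H : {group gT}) :
  prime p -> H \subset G -> abelian H -> ~~ (p %| #|G : H|) -> #|G : H| < 2 * p ->
  'O_p(H) <| G \/ [/\ solvable G, maximal H G & #|G : H| = p.+1].
Proof.
move=> pr_p sHG abH p'iH iH_lt; set P := 'O_p(H)%G.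
have sylP : p.-Sylow(G) P := nilpotent_pcore_Sylow pr_p sHG (abelian_nil abH) p'iH.
have sHN : H \subset 'N_G(P) by rewrite subsetI sHG normal_norm ?pcore_normal.
have np_mod : #|G : 'N_G(P)| %% p = 1%N by rewrite -(card_Syl sylP) card_Syl_mod.
have [np1 | np_neq1] := eqVneq #|G : 'N_G(P)| 1%N.
  left; rewrite /normal (pHall_sub sylP).
  by rewrite -(index1g (subsetIl G _) np1) subsetIr.
have [np_succ /(index1g sHN) nPE] : #|G : 'N_G(P)| = p.+1 /\ #|'N_G(P) : H| = 1%N.
  apply: modn1_mul_ltn_double (prime_gt1 pr_p) np_mod np_neq1 (indexg_gt0 _ _) _.
  by rewrite Lagrange_index ?subsetIl.
rewrite -nPE in np_succ; right.
have maxH := Sylow_normalizer_maximal pr_p sylP (pcore_sub p H) (esym nPE) np_succ.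
split=> //; apply: abelian_maximal_selfnormalizing_sol abH maxH _ _; last first.
  by right; rewrite np_succ.
rewrite {2}nPE subsetI subsetIl /=.
exact: subset_trans (subsetIr _ _) (char_norms (pcore_char p H)).
Qed.

Theorem proposition2p5 (gT : finGroupType) (G : {group gT}) (x : gT) :
  1 < #|G| ->
  x \in G ->
  #|G : <[x]>| < 2 * max_pdiv #|G| ->
  (exists2 P : {group gT}, P \in 'Syl_(max_pdiv #|G|)(G) & (P <| G) && cyclic P)
  \/
  [/\ solvable G, maximal <[x]> G &
      (#|G : <[x]>| == max_pdiv #|G|) || (#|G : <[x]>| == (max_pdiv #|G|).+1)].
Proof.
move=> G_gt1 Gx; set p := max_pdiv #|G|; set H := <[x]>%G; move=> iH_lt.
have pr_p : prime p := max_pdiv_prime G_gt1.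
have sHG : H \subset G by rewrite cycle_subG.
have abH : abelian H := cycle_abelian x.
have [p_dvd_iH | p'iH] := boolP (p %| #|G : H|).
  have iH := dvdn_ltn_double (indexg_gt0 G H) p_dvd_iH iH_lt.
  right; rewrite iH eqxx; split=> //; rewrite -iH in pr_p.
    exact: abelian_prime_index_sol sHG abH pr_p.
  exact: p_index_maximal.
have [nPG | [solG maxH iH]] := abelian_pcore_normal_or_maximal pr_p sHG abH p'iH iH_lt.
  left; exists 'O_p(H)%G; first by rewrite inE nilpotent_pcore_Sylow ?abelian_nil.
  by rewrite nPG (cyclicS (pcore_sub p H) (cycle_cyclic x)).
by right; rewrite iH eqxx orbT.
Qed.
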